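(* If $G_1$ and $G_2$ are vertex-disjoint semi-weakly CIS graphs, then their disjoint union $G_1+G_2$ and their join $G_1*G_2$ are also semi-weakly CIS.
   Context: A strong clique of a graph is a clique meeting every maximal stable set. A graph is semi-weakly CIS if it admits a family of strong cliques such that every two adjacent vertices lie together in some member of the family. The join $G_1*G_2$ is obtained from $G_1+G_2$ by adding all edges between $V(G_1)$ and $V(G_2)$. *)

From mathcomp Require Import all_boot.
Set Implicit Arguments. Unset Strict Implicit. Unset Printing Implicit Defensive.

Definition simple_graph (T : finType) (e : rel T) : Prop :=
  symmetric e /\ irreflexive e.

Section Graphs.
Variable T : finType.
Variable e : rel T.

Definition is_clique (K : {set T}) : bool :=
  [forall x in K, forall y in K, (x != y) ==> e x y].

Definition is_stable (S : {set T}) : bool :=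
  [forall x in S, forall y in S, ~~ e x y].

Definition is_max_stable (S : {set T}) : bool := maxset is_stable S.

Definition is_strong_clique (K : {set T}) : bool :=
  is_clique K && [forall S : {set T}, is_max_stable S ==> (K :&: S != set0)].

Definition semi_weakly_CIS : Prop :=
  exists F : {set {set T}},
    (forall K, K \in F -> is_strong_clique K) /\
    (forall u v, e u v -> exists2 K, K \in F & (u \in K) && (v \in K)).
End Graphs.

Definition disj_union (T1 T2 : finType) (e1 : rel T1) (e2 : rel T2)
  : rel (T1 + T2)%type :=
  fun x y => match x, y with
             | inl a, inl b => e1 a b
             | inr a, inr b => e2 a b
             | _, _ => false
             end.

Definition graph_join (T1 T2 : finType) (e1 : rel T1) (e2 : rel T2)
  : rel (T1 + T2)%type :=
  fun x y => match x, y with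
             | inl a, inl b => e1 a b
             | inr a, inr b => e2 a b
             | _, _ => true
             end.

From mathcomp Require Import all_boot.
Set Implicit Arguments. Unset Strict Implicit. Unset Printing Implicit Defensive.

(* A maximal stable set of G1 + G2 restricts to a maximal stable set of each
   part, and a maximal stable set of G1 * G2 lies inside one part, where it is
   again maximal stable.  Hence a strong clique of one part stays strong in
   G1 + G2, and K1 u K2 is strong in G1 * G2 whenever K1, K2 are strong in
   G1, G2.  In a semi-weakly CIS graph every vertex lies in a strong clique
   (an isolated vertex belongs to every maximal stable set), which covers the
   edges between the two parts of the join. *)

Section StrongCliques.
Variables (T : finType) (e : rel T).

Lemma stableP (S : {set T}) :
  reflect (forall x y, x \in S -> y \in S -> ~~ e x y) (is_stable e S).
Proof.
apply: (iffP forallP) => [H x y Sx Sy | H x].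
  by move/implyP/(_ Sx)/forallP/(_ y)/implyP: (H x); apply.
by apply/implyP => Sx; apply/forallP => y; apply/implyP; apply: H.
Qed.

Lemma cliqueP (K : {set T}) :
  reflect (forall x y, x \in K -> y \in K -> x != y -> e x y) (is_clique e K).
Proof.
apply: (iffP forallP) => [H x y Kx Ky | H x].
  by move/implyP/(_ Kx)/forallP/(_ y)/implyP/(_ Ky)/implyP: (H x).
by apply/implyP => Kx; apply/forallP => y; apply/implyP => Ky; apply/implyP; apply: H.
Qed.

Lemma strong_cliqueP (K : {set T}) :
  reflect (is_clique e K /\
           forall S, is_max_stable e S -> exists2 x, x \in K & x \in S)
          (is_strong_clique e K).
Proof.
apply: (iffP andP) => -[cliqueK meetK]; split=> //.
  move=> S maxS; move/forallP/(_ S)/implyP/(_ maxS)/set0Pn: meetK => [x].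
  by rewrite inE => /andP[Kx Sx]; exists x.
apply/forallP => S; apply/implyP => /meetK[x Kx Sx].
by apply/set0Pn; exists x; rewrite inE Kx.
Qed.

Lemma semi_weakly_CISP :
  semi_weakly_CIS e <->
  (forall u v, e u v -> exists2 K, is_strong_clique e K & (u \in K) && (v \in K)).
Proof.
split=> [[F [strongF coverF]] u v /coverF[K FK uvK] | cover].
  by exists K; first exact: strongF.
exists [set K | is_strong_clique e K]; split=> [K | u v /cover[K strongK uvK]].
  by rewrite inE.
by exists K; rewrite ?inE.
Qed.

Lemma max_stable_isolated (v : T) (S : {set T}) :
  simple_graph e -> (forall u, ~~ e v u) -> is_max_stable e S -> v \in S.
Proof.
move=> [sym_e irr_e] isolated_v /maxsetP[/stableP stableS maxS].
have stable_vS : is_stable e (v |: S).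
  apply/stableP => x y; rewrite !inE.
  move=> /predU1P[-> | Sx] /predU1P[-> | Sy].
  - by rewrite irr_e.
  - exact: isolated_v.
  - by rewrite sym_e isolated_v.
  - exact: stableS.
by rewrite -(maxS _ stable_vS (subsetUr _ _)) setU11.
Qed.

Lemma vertex_in_strong_clique (v : T) :
  simple_graph e -> semi_weakly_CIS e -> exists2 K, is_strong_clique e K & v \in K.
Proof.
move=> simple_e /semi_weakly_CISP cover.
case: (pickP (e v)) => [u /cover[K strongK /andP[vK _]] | isolated_v].
  by exists K.
exists [set v]; last exact: set11.
apply/strong_cliqueP; split.
  by apply/cliqueP => x y /set1P-> /set1P->; rewrite eqxx.
move=> S maxS; exists v; rewrite ?set11 //.
by apply: max_stable_isolated maxS => // u; rewrite isolated_v.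
Qed.

(* [T -> _] encodes "unless [T] is empty": the empty graph has no strong
   clique, its only maximal stable set being [set0]. *)
Lemma exists_strong_clique_if_inhabited :
  simple_graph e -> semi_weakly_CIS e -> exists K : {set T}, T -> is_strong_clique e K.
Proof.
move=> simple_e swc_e; case: (pickP (@predT T)) => [v _ | no_vertex].
  by have [K strongK _] := vertex_in_strong_clique v simple_e swc_e; exists K.
by exists set0 => v; have := no_vertex v.
Qed.

End StrongCliques.

(* If the image of [f] has no edge to the rest of [S], then a stable set [B]
   above [f @^-1: S] can be added to [S], so maximality transfers. *)
Lemma max_stable_preimset (T T' : finType) (e : rel T) (e' : rel T')
    (f : T' -> T) (S : {set T}) :
  (forall x y, e (f x) (f y) = e' x y) ->
  (forall x y, y \in S -> y \notin codom f -> ~~ e (f x) y && ~~ e y (f x)) ->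
  is_max_stable e S -> is_max_stable e' (f @^-1: S).
Proof.
move=> e_f outside /maxsetP[/stableP stableS maxS]; apply/maxsetP; split.
  by apply/stableP => x y; rewrite !inE -e_f; apply: stableS.
move=> B /stableP stableB subB.
have mixed x b : x \in S -> b \in B -> ~~ e x (f b) && ~~ e (f b) x.
  move=> Sx Bb; case: (boolP (x \in codom f)) => [/codomP[a xfa] | ?].
    rewrite xfa in Sx *.
    have Ba : a \in B by apply: (subsetP subB); rewrite inE.
    by rewrite !e_f !stableB.
  by rewrite andbC outside.
have stableSB : is_stable e (S :|: f @: B).
  apply/stableP => x y /setUP[Sx | /imsetP[a Ba ->]] /setUP[Sy | /imsetP[b Bb ->]].
  - exact: stableS.
  - by case/andP: (mixed _ _ Sx Bb).
  - by case/andP: (mixed _ _ Sy Ba).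
  - by rewrite e_f stableB.
have SB_S := maxS _ stableSB (subsetUl _ _).
apply/eqP; rewrite eqEsubset subB andbT; apply/subsetP => b Bb.
by rewrite inE -SB_S inE imset_f ?orbT.
Qed.

Definition sum_set (T1 T2 : finType) (K1 : {set T1}) (K2 : {set T2})
  : {set (T1 + T2)%type} :=
  [set z | match z with inl a => a \in K1 | inr b => b \in K2 end].

Section UnionAndJoin.
Variables (T1 T2 : finType) (e1 : rel T1) (e2 : rel T2).

Lemma disj_union_max_stable_l (S : {set (T1 + T2)%type}) :
  is_max_stable (disj_union e1 e2) S -> is_max_stable e1 (inl @^-1: S).
Proof. by apply: max_stable_preimset => // x [a | b] _ //; rewrite codom_f. Qed.

Lemma disj_union_max_stable_r (S : {set (T1 + T2)%type}) :
  is_max_stable (disj_union e1 e2) S -> is_max_stable e2 (inr @^-1: S).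
Proof. by apply: max_stable_preimset => // x [a | b] _ //; rewrite codom_f. Qed.

Lemma graph_join_max_stable_l (S : {set (T1 + T2)%type}) :
  (forall b, inr b \notin S) ->
  is_max_stable (graph_join e1 e2) S -> is_max_stable e1 (inl @^-1: S).
Proof.
move=> noR; apply: max_stable_preimset => // x [a | b]; first by rewrite codom_f.
by rewrite (negbTE (noR b)).
Qed.

Lemma graph_join_max_stable_r (S : {set (T1 + T2)%type}) :
  (forall a, inl a \notin S) ->
  is_max_stable (graph_join e1 e2) S -> is_max_stable e2 (inr @^-1: S).
Proof.
move=> noL; apply: max_stable_preimset => // x [a | b]; last by rewrite codom_f.
by rewrite (negbTE (noL a)).
Qed.

Lemma graph_join_stable_one_side (S : {set (T1 + T2)%type}) a b :
  is_stable (graph_join e1 e2) S -> inl a \in S -> inr b \in S -> False.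
Proof. by move=> /stableP stableS Sa Sb; have := stableS _ _ Sa Sb. Qed.

Lemma disj_union_strong_clique_l (K1 : {set T1}) :
  is_strong_clique e1 K1 -> is_strong_clique (disj_union e1 e2) (sum_set K1 set0).
Proof.
case/strong_cliqueP => /cliqueP cliqueK1 meetK1; apply/strong_cliqueP; split.
  apply/cliqueP => -[a | a] [b | b]; rewrite !inE //= => Ka Kb neq_ab.
  by apply: cliqueK1 => //; apply: contraNneq neq_ab => ->.
move=> S /disj_union_max_stable_l/meetK1[a K1a]; rewrite inE => Sa.
by exists (inl a); rewrite ?inE.
Qed.

Lemma disj_union_strong_clique_r (K2 : {set T2}) :
  is_strong_clique e2 K2 -> is_strong_clique (disj_union e1 e2) (sum_set set0 K2).
Proof.
case/strong_cliqueP => /cliqueP cliqueK2 meetK2; apply/strong_cliqueP; split.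
  apply/cliqueP => -[a | a] [b | b]; rewrite !inE //= => Ka Kb neq_ab.
  by apply: cliqueK2 => //; apply: contraNneq neq_ab => ->.
move=> S /disj_union_max_stable_r/meetK2[b K2b]; rewrite inE => Sb.
by exists (inr b); rewrite ?inE.
Qed.

(* The vertex [T1 + T2] excludes the empty join, whose maximal stable set
   [set0] meets no clique. *)
Lemma graph_join_strong_clique (K1 : {set T1}) (K2 : {set T2}) :
  T1 + T2 -> (T1 -> is_strong_clique e1 K1) -> (T2 -> is_strong_clique e2 K2) ->
  is_strong_clique (graph_join e1 e2) (sum_set K1 K2).
Proof.
move=> vertex strongK1 strongK2; apply/strong_cliqueP; split.
  apply/cliqueP => -[a | a] [b | b]; rewrite !inE //= => Ka Kb neq_ab.
    have /strong_cliqueP[/cliqueP cliqueK1 _] := strongK1 a.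
    by apply: cliqueK1 => //; apply: contraNneq neq_ab => ->.
  have /strong_cliqueP[/cliqueP cliqueK2 _] := strongK2 a.
  by apply: cliqueK2 => //; apply: contraNneq neq_ab => ->.
move=> S maxS; have [stableS _] := maxsetP maxS.
have meet_left (a : T1) :
    (forall b, inr b \notin S) -> exists2 z, z \in sum_set K1 K2 & z \in S.
  move=> noR; have /strong_cliqueP[_ meetK1] := strongK1 a.
  have [a' K1a'] := meetK1 _ (graph_join_max_stable_l noR maxS).
  by rewrite inE => Sa'; exists (inl a'); rewrite ?inE.
have meet_right (b : T2) :
    (forall a, inl a \notin S) -> exists2 z, z \in sum_set K1 K2 & z \in S.
  move=> noL; have /strong_cliqueP[_ meetK2] := strongK2 b.
  have [b' K2b'] := meetK2 _ (graph_join_max_stable_r noL maxS).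
  by rewrite inE => Sb'; exists (inr b'); rewrite ?inE.
case: (pickP [pred b | inr b \in S]) => [b Sb | noR].
  apply: (meet_right b) => a; apply/negP => Sa.
  exact: graph_join_stable_one_side stableS Sa Sb.
case: vertex => [a | b]; first by apply: (meet_left a) => b; exact/negbT/noR.
case: (pickP [pred a | inl a \in S]) => [a Sa | noL].
  by apply: (meet_left a) => b'; exact/negbT/noR.
by apply: (meet_right b) => a; exact/negbT/noL.
Qed.

End UnionAndJoin.

Theorem proposition15 (T1 T2 : finType) (e1 : rel T1) (e2 : rel T2) :
  simple_graph e1 -> simple_graph e2 ->
  semi_weakly_CIS e1 -> semi_weakly_CIS e2 ->
  semi_weakly_CIS (disj_union e1 e2) /\ semi_weakly_CIS (graph_join e1 e2).
Proof.
move=> simple1 simple2 swc1 swc2.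
have cover1 := (semi_weakly_CISP e1).1 swc1.
have cover2 := (semi_weakly_CISP e2).1 swc2.
have [K1 strongK1] := exists_strong_clique_if_inhabited simple1 swc1.
have [K2 strongK2] := exists_strong_clique_if_inhabited simple2 swc2.
split; apply/semi_weakly_CISP => -[a | a] [b | b] //=.
- case/cover1 => K strongK abK; exists (sum_set K set0); last by rewrite !inE.
  exact: disj_union_strong_clique_l.
- case/cover2 => K strongK abK; exists (sum_set set0 K); last by rewrite !inE.
  exact: disj_union_strong_clique_r.
- case/cover1 => K strongK abK; exists (sum_set K K2); last by rewrite !inE.
  exact: graph_join_strong_clique (inl a) (fun=> strongK) strongK2.
- move=> _; have [Ka strongKa aKa] := vertex_in_strong_clique a simple1 swc1.
  have [Kb strongKb bKb] := vertex_in_strong_clique b simple2 swc2.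
  exists (sum_set Ka Kb); last by rewrite !inE aKa.
  exact: graph_join_strong_clique (inl a) (fun=> strongKa) (fun=> strongKb).
- move=> _; have [Ka strongKa aKa] := vertex_in_strong_clique a simple2 swc2.
  have [Kb strongKb bKb] := vertex_in_strong_clique b simple1 swc1.
  exists (sum_set Kb Ka); last by rewrite !inE aKa.
  exact: graph_join_strong_clique (inr a) (fun=> strongKb) (fun=> strongKa).
- case/cover2 => K strongK abK; exists (sum_set K1 K); last by rewrite !inE.
  exact: graph_join_strong_clique (inr a) strongK1 (fun=> strongK).
Qed.
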